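(* Consider the MT-model on $\mathbb{T}_2$ and let $$R:=\max\{n\ge1:\ \eta_t(x)=1 \text{ for some } x\in\partial\mathbb{T}_{2,n} \text{ and some } t\in\mathbb{R}_+\}$$ be the range of spreading. Define $$\alpha_1(n):=\frac{(13/9)\{1-(8/9)^n\}}{13/9-(8/9)^n},\qquad \alpha_2(n):=\frac{(4/3)\{1-(8/9)^n\}}{4/3-(8/9)^n}.$$ Then for every $n\ge0$, $$\tfrac{3}{9}\alpha_1(n)+\tfrac49\alpha_1(n)^2+\tfrac29\alpha_1(n)^3\ \le\ \mathbb{P}(R\le n)\ \le\ \tfrac39\alpha_2(n)+\tfrac49\alpha_2(n)^2+\tfrac29\alpha_2(n)^3.$$ Moreover, $6.144\le\mathbb{E}(R)\le 7.448$.
   Context: $\mathbb{T}_2$ is the infinite tree in which every vertex has degree $3$, with root $\mathbf 0$; $\partial\mathbb{T}_{2,n}$ is the set of vertices at graph distance $n$ from $\mathbf 0$. The MT-model on $\mathbb{T}_2$ is the continuous-time Markov process $(\eta_t)_{t\ge0}$ on $\{-1,0,1\}^{\mathbb{T}_2}$ ($-1$ = ignorant, $0$ = spreader, $1$ = stifler) in which a vertex in state $-1$ jumps to $0$ at rate equal to its number of neighbours in state $0$, and a vertex in state $0$ jumps to $1$ at rate equal to its number of neighbours in states $\{0,1\}$ (equivalently, each spreader contacts each neighbour at rate 1, informing ignorants and becoming a stifler upon contacting a non-ignorant). Initially $\eta_0(\mathbf 0)=0$ and all other vertices are in state $-1$. *)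

From Stdlib Require Import Reals List Arith ZArith Lra.
From Coquelicot Require Import Coquelicot.
Import ListNotations.
Open Scope R_scope.

(** A vertex is the word of moves from the root: the root is [[]];
    [a :: w] with [a < 3] selects one of the 3 neighbours of the root and each
    further letter ([< 2]) selects one of the two children.  Only such words are
    ever reached from the root through [nbrs]. *)
Definition vertex := list nat.
Definition root : vertex := [].
Definition veq_dec : forall x y : vertex, {x = y} + {x <> y} :=
  list_eq_dec Nat.eq_dec.

Definition children (v : vertex) : list vertex :=
  match v with
  | [] => [[0%nat]; [1%nat]; [2%nat]]
  | _ => [v ++ [0%nat]; v ++ [1%nat]]
  end.
Definition parent (v : vertex) : list vertex :=
  match v with [] => [] | _ => [removelast v] end.
Definition nbrs (v : vertex) : list vertex := parent v ++ children v.
(** graph distance from the root: x is in \partial T_{2,n} iff depth x = n *)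
Definition depth (v : vertex) : nat := length v.

(** * Configurations of the MT-model with finitely many non-ignorant sites.
    [eta c x] is -1 (ignorant), 0 (spreader) or 1 (stifler). *)
Record config := mkConfig { spreaders : list vertex; stiflers : list vertex }.

Definition eta (c : config) (x : vertex) : Z :=
  if in_dec veq_dec x (spreaders c) then 0%Z
  else if in_dec veq_dec x (stiflers c) then 1%Z else (-1)%Z.

Definition count_nbrs (P : Z -> bool) (c : config) (x : vertex) : nat :=
  length (filter (fun y => P (eta c y)) (nbrs x)).

Definition rate (c : config) (x : vertex) : nat :=
  match eta c x with
  | (-1)%Z => count_nbrs (fun s => Z.eqb s 0) c x
  | 0%Z => count_nbrs (fun s => orb (Z.eqb s 0) (Z.eqb s 1)) c x
  | _ => 0%nat
  end.

Definition flip (c : config) (x : vertex) : config :=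
  match eta c x with
  | (-1)%Z => mkConfig (x :: spreaders c) (stiflers c)
  | 0%Z => mkConfig (remove veq_dec x (spreaders c)) (x :: stiflers c)
  | _ => c
  end.

(** all sites that can have positive rate: spreaders and their neighbours *)
Definition candidates (c : config) : list vertex :=
  nodup veq_dec (spreaders c ++ flat_map nbrs (spreaders c)).

Definition total_rate (c : config) : nat :=
  fold_right (fun x acc => (rate c x + acc)%nat) 0%nat (candidates c).

Definition init : config := mkConfig [root] [].

Definition good (n : nat) (c : config) : bool :=
  forallb (fun x => Nat.leb (depth x) n) (stiflers c).

(** [q k n c] = probability, for the embedded jump chain of the MT-model
    started from c (site x flips with probability rate x / total rate; the
    chain is absorbed when the total rate is 0), that the configurations at
    jumps 0..k are all [good n]. *)
Fixpoint q (k n : nat) (c : config) : R :=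
  if good n c then
    match k with
    | O => 1
    | S k' =>
        if Nat.eqb (total_rate c) 0 then 1
        else fold_right
               (fun x acc => INR (rate c x) / INR (total_rate c) * q k' n (flip c x) + acc)
               0 (candidates c)
    end
  else 0.

(** P(R <= n) = P(no site at distance > n is ever a stifler)
    = lim_k q k n init  (decreasing limit). *)
Definition P_R_le (n : nat) : R := real (Lim_seq (fun k => q k n init)).

Definition P_R_eq (n : nat) : R :=
  match n with O => P_R_le O | S m => P_R_le (S m) - P_R_le m end.

Definition P_R_finite : R := real (Lim_seq P_R_le).

Definition alpha1 (n : nat) : R :=
  (13/9) * (1 - (8/9) ^ n) / (13/9 - (8/9) ^ n).
Definition alpha2 (n : nat) : R :=
  (4/3) * (1 - (8/9) ^ n) / (4/3 - (8/9) ^ n).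

From Stdlib Require Import Reals List Arith ZArith Lra Lia Permutation.
From Coquelicot Require Import Coquelicot.
Import ListNotations.
Open Scope R_scope.

(* Each spreader has total rate 3: it stifles at rate 3 - i when it has i ignorant
   children, and informs each of them at rate 1. An informed child starts an
   independent copy of the process in its own subtree, so the probability of never
   creating a stifler below depth n is a product, over the current spreaders, of a
   function of the depth and of the number of ignorant children. This product is
   harmonic for the jump chain; at the initial configuration it equals
   beta_n g(beta_n), where g(s) = 1/3 + 4/9 s + 2/9 s^2 and beta_(n+1) = g(beta_n).
   The chain is absorbed fast enough for the finite-horizon probabilities to converge
   to it, because the expected number of jumps still caused by the spreaders is
   finite and decreases by one at each jump. Bracketing g between two Möbius maps
   gives the bounds on P(R <= n); the tail 1 - P(R <= n) is a cubic in 1 - beta_n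
   and is squeezed between polynomials in (8/9)^n, whose sums are explicit. *)

Definition sumR {A} (l : list A) (f : A -> R) : R :=
  fold_right (fun x acc => f x + acc) 0 l.
Definition prodR {A} (l : list A) (f : A -> R) : R :=
  fold_right (fun x acc => f x * acc) 1 l.

Section ListSums.
Context {A : Type}.

Lemma sumR_app (l1 l2 : list A) f : sumR (l1 ++ l2) f = sumR l1 f + sumR l2 f.
Proof. induction l1; simpl; [lra | rewrite IHl1; lra]. Qed.

Lemma sumR_ext_in (l : list A) f g :
  (forall x, In x l -> f x = g x) -> sumR l f = sumR l g.
Proof. induction l; simpl; intros H; auto. rewrite H, IHl; auto. Qed.

Lemma prodR_ext_in (l : list A) f g :
  (forall x, In x l -> f x = g x) -> prodR l f = prodR l g.
Proof. induction l; simpl; intros H; auto. rewrite H, IHl; auto. Qed.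

Lemma sumR_le (l : list A) f g :
  (forall x, In x l -> f x <= g x) -> sumR l f <= sumR l g.
Proof.
  induction l as [|a l IH]; simpl; intros H; [lra|].
  pose proof (H a (or_introl eq_refl)). pose proof (IH (fun x h => H x (or_intror h))). lra.
Qed.

Lemma sumR_const (l : list A) c : sumR l (fun _ => c) = INR (length l) * c.
Proof. induction l; simpl length; [simpl; lra|]. rewrite S_INR; simpl; rewrite IHl; lra. Qed.

Lemma sumR_nonneg (l : list A) f : (forall x, In x l -> 0 <= f x) -> 0 <= sumR l f.
Proof. intros H. apply (sumR_le l (fun _ => 0)) in H. rewrite sumR_const in H. lra. Qed.

Lemma sumR_plus (l : list A) f g : sumR l (fun x => f x + g x) = sumR l f + sumR l g.
Proof. induction l; simpl; [lra | rewrite IHl; lra]. Qed.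

Lemma sumR_scal_l (l : list A) c f : sumR l (fun x => c * f x) = c * sumR l f.
Proof. induction l; simpl; [lra | rewrite IHl; lra]. Qed.

Lemma sumR_flat_map {B} (l : list B) (h : B -> list A) f :
  sumR (flat_map h l) f = sumR l (fun x => sumR (h x) f).
Proof. induction l; simpl; auto. rewrite sumR_app, IHl; auto. Qed.

Lemma sumR_perm (l1 l2 : list A) f : Permutation l1 l2 -> sumR l1 f = sumR l2 f.
Proof. induction 1; simpl; lra. Qed.

Lemma sumR_filter (P : A -> bool) (l : list A) f :
  (forall x, P x = false -> f x = 0) -> sumR l f = sumR (filter P l) f.
Proof.
  intros H; induction l as [|a l IH]; simpl; auto.
  destruct (P a) eqn:E; simpl; rewrite IH; auto. rewrite H; auto; lra.
Qed.

Lemma sumR_eq_on_support (P : A -> bool) (l1 l2 : list A) f :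
  NoDup l1 -> NoDup l2 ->
  (forall x, P x = false -> f x = 0) ->
  (forall x, P x = true -> (In x l1 <-> In x l2)) ->
  sumR l1 f = sumR l2 f.
Proof.
  intros N1 N2 H0 H1. rewrite (sumR_filter P l1), (sumR_filter P l2); auto.
  apply sumR_perm, NoDup_Permutation; try apply NoDup_filter; auto.
  intros x; rewrite !filter_In. split; intros [Hi Hp]; split; auto; apply (H1 x Hp); auto.
Qed.

Lemma prodR_in_01 (l : list A) f :
  (forall x, In x l -> 0 <= f x <= 1) -> 0 <= prodR l f <= 1.
Proof.
  induction l as [|a l IH]; simpl; intros H; [lra|].
  pose proof (H a (or_introl eq_refl)). pose proof (IH (fun x h => H x (or_intror h))). nra.
Qed.

Variable dec : forall x y : A, {x = y} + {x <> y}.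

Lemma sumR_remove (l : list A) s f : NoDup l -> In s l ->
  sumR l f = f s + sumR (remove dec s l) f.
Proof.
  induction l as [|a l IH]; simpl; intros N Hs; [tauto|].
  inversion N; subst. destruct (dec s a) as [->|ne].
  - rewrite notin_remove; auto.
  - destruct Hs as [->|Hs]; [congruence|]. simpl. rewrite IH; auto. lra.
Qed.

Lemma prodR_remove (l : list A) s f : NoDup l -> In s l ->
  prodR l f = f s * prodR (remove dec s l) f.
Proof.
  induction l as [|a l IH]; simpl; intros N Hs; [tauto|].
  inversion N; subst. destruct (dec s a) as [->|ne].
  - rewrite notin_remove; auto.
  - destruct Hs as [->|Hs]; [congruence|]. simpl. rewrite IH; auto. lra.
Qed.

Lemma NoDup_remove_dec (l : list A) x : NoDup l -> NoDup (remove dec x l).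
Proof.
  induction l as [|a l IH]; simpl; intros N; auto. inversion N; subst.
  destruct dec; auto. constructor; auto. intros H. apply in_remove in H. tauto.
Qed.

Lemma length_filter_remove_one (f : A -> bool) l y :
  NoDup l -> In y (filter f l) ->
  S (length (filter (fun z => andb (f z) (if dec z y then false else true)) l)) =
  length (filter f l).
Proof.
  induction l as [|a l IH]; simpl; intros N H; [tauto|]. inversion N; subst.
  destruct (f a) eqn:Ea; simpl.
  - destruct (dec a y) as [->|ne]; simpl.
    + f_equal. f_equal. apply filter_ext_in. intros z Hz.
      destruct (dec z y); [subst; tauto|]. apply Bool.andb_true_r.
    + destruct H as [->|H]; [congruence|]. rewrite IH; auto.
  - apply IH; auto.
Qed.

End ListSums.

Lemma nbrs_length v : length (nbrs v) = 3%nat.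
Proof. destruct v; reflexivity. Qed.

Lemma length_removelast (v : vertex) : v <> [] -> S (length (removelast v)) = length v.
Proof.
  intros H. pose proof (app_removelast_last 0%nat H) as E.
  apply (f_equal (@length nat)) in E. rewrite length_app in E. simpl in E. lia.
Qed.

Lemma nbrs_nonroot v : v <> [] -> nbrs v = [removelast v; v ++ [0%nat]; v ++ [1%nat]].
Proof. destruct v; [congruence | reflexivity]. Qed.

Lemma children_spec s y : In y (children s) ->
  y <> [] /\ removelast y = s /\ depth y = S (depth s).
Proof.
  unfold depth. destruct s as [|a s]; intros H.
  - simpl in H. intuition subst; simpl; auto; discriminate.
  - destruct H as [<-|[<-|[]]]; (split; [destruct s; discriminate|]);
      rewrite removelast_last, length_app; simpl; split; auto; lia.
Qed.

Lemma NoDup_nbrs v : NoDup (nbrs v).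
Proof.
  destruct (list_eq_dec Nat.eq_dec v []) as [->|nv].
  - repeat constructor; simpl; intuition discriminate.
  - rewrite nbrs_nonroot by auto. pose proof (length_removelast v nv).
    repeat constructor; simpl.
    + intros [E|[E|[]]]; apply (f_equal (@length nat)) in E;
        rewrite length_app in E; simpl in E; lia.
    + intros [E|[]]. apply app_inv_head in E. discriminate.
    + tauto.
Qed.

Definition informed (c : config) (x : vertex) : Prop :=
  In x (spreaders c) \/ In x (stiflers c).

(** Invariant of the configurations reachable from [init]: the informed sites form a subtree
    containing the root. *)
Record wf (c : config) : Prop := {
  wf_NoDup_spreaders : NoDup (spreaders c);
  wf_NoDup_stiflers : NoDup (stiflers c);
  wf_disjoint : forall x, In x (spreaders c) -> ~ In x (stiflers c);
  wf_root : informed c root;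
  wf_parent : forall x, informed c x -> x <> [] -> informed c (removelast x) }.

Lemma eta_spreader c x : In x (spreaders c) -> eta c x = 0%Z.
Proof. unfold eta; destruct in_dec; tauto. Qed.

Lemma eta_stifler c x : ~ In x (spreaders c) -> In x (stiflers c) -> eta c x = 1%Z.
Proof. unfold eta; destruct in_dec; [tauto|]; destruct in_dec; tauto. Qed.

Lemma eta_ignorant c x : ~ informed c x -> eta c x = (-1)%Z.
Proof. unfold informed, eta; destruct in_dec; [tauto|]; destruct in_dec; tauto. Qed.

Lemma eqb_eta_ignorant c x : Z.eqb (eta c x) (-1) = true <-> ~ informed c x.
Proof.
  unfold informed, eta; destruct in_dec; [|destruct in_dec]; simpl; intuition; discriminate.
Qed.

Definition ignorant_nbrs (c : config) (s : vertex) : list vertex :=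
  filter (fun y => Z.eqb (eta c y) (-1)) (nbrs s).
Definition n_ignorant (c : config) (s : vertex) : nat := length (ignorant_nbrs c s).

Lemma n_ignorant_le c s : (n_ignorant c s <= 3)%nat.
Proof. unfold n_ignorant, ignorant_nbrs. rewrite <- (nbrs_length s). apply filter_length_le. Qed.

Lemma total_rate_sumR c :
  INR (total_rate c) = sumR (candidates c) (fun x => INR (rate c x)).
Proof.
  unfold total_rate. induction (candidates c); simpl; auto.
  rewrite plus_INR, IHl. reflexivity.
Qed.

Section WellFormed.
Variable c : config.
Hypothesis Hc : wf c.

Lemma ignorant_nonroot y : ~ informed c y -> y <> [].
Proof. intros H ->. apply H, (wf_root c Hc). Qed.

Lemma ignorant_nbr_is_child s y :
  informed c s -> In y (nbrs s) -> ~ informed c y -> In y (children s).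
Proof.
  intros Hs Hy Hi. apply in_app_or in Hy. destruct Hy as [Hy|Hy]; auto.
  destruct s as [|a s]; [simpl in Hy; tauto|]. destruct Hy as [<-|[]].
  exfalso; apply Hi, (wf_parent c Hc); auto. discriminate.
Qed.

Lemma children_ignorant y z : ~ informed c y -> In z (children y) -> ~ informed c z.
Proof.
  intros Hy Hz Hinf. destruct (children_spec _ _ Hz) as [nz [r _]].
  apply Hy. rewrite <- r. apply (wf_parent c Hc); auto.
Qed.

Lemma ignorant_nbrs_spec s y : informed c s -> In y (ignorant_nbrs c s) ->
  ~ informed c y /\ In y (children s) /\ removelast y = s /\ depth y = S (depth s).
Proof.
  intros Hs Hy. apply filter_In in Hy. destruct Hy as [Hy E].
  apply eqb_eta_ignorant in E. pose proof (ignorant_nbr_is_child s y Hs Hy E) as Hch.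
  destruct (children_spec _ _ Hch) as [_ [? ?]]. auto.
Qed.

Lemma rate_ignorant y : ~ informed c y ->
  rate c y = if in_dec veq_dec (removelast y) (spreaders c) then 1%nat else 0%nat.
Proof.
  intros Hy. pose proof (ignorant_nonroot y Hy) as Hy0.
  unfold rate. rewrite (eta_ignorant c y Hy). unfold count_nbrs.
  rewrite (nbrs_nonroot y Hy0). simpl filter.
  rewrite !(eta_ignorant c (y ++ _)).
  2, 3: apply (children_ignorant y); auto; destruct y; [congruence | simpl; auto].
  destruct in_dec as [i|n].
  - rewrite (eta_spreader c _ i). reflexivity.
  - unfold eta. destruct in_dec; [tauto|]. destruct in_dec; reflexivity.
Qed.

Lemma rate_stifler x : ~ In x (spreaders c) -> In x (stiflers c) -> rate c x = 0%nat.
Proof. intros a b. unfold rate. rewrite (eta_stifler c x a b). reflexivity. Qed.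

Lemma rate_spreader s : In s (spreaders c) -> INR (rate c s) = 3 - INR (n_ignorant c s).
Proof.
  intros Hs. unfold rate. rewrite (eta_spreader c s Hs). unfold count_nbrs, n_ignorant, ignorant_nbrs.
  pose proof (filter_length (fun y => Z.eqb (eta c y) (-1)) (nbrs s)) as L.
  rewrite nbrs_length in L.
  rewrite (filter_ext (fun y => negb (Z.eqb (eta c y) (-1)))
             (fun y => orb (Z.eqb (eta c y) 0) (Z.eqb (eta c y) 1))) in L.
  2:{ intros y. unfold eta. destruct in_dec; [reflexivity|]. destruct in_dec; reflexivity. }
  apply (f_equal INR) in L. rewrite plus_INR in L. simpl in L. lra.
Qed.

Lemma NoDup_flat_map_ignorant_nbrs l :
  NoDup l -> (forall s, In s l -> informed c s) -> NoDup (flat_map (ignorant_nbrs c) l).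
Proof.
  induction l as [|a l IH]; simpl; intros N H; [constructor|]. inversion N; subst.
  apply NoDup_app.
  - apply NoDup_filter, NoDup_nbrs.
  - apply IH; auto.
  - intros y Hy Hy2. apply in_flat_map in Hy2. destruct Hy2 as [t [Ht Hyt]].
    destruct (ignorant_nbrs_spec a y (H a (or_introl eq_refl)) Hy) as [_ [_ [r1 _]]].
    destruct (ignorant_nbrs_spec t y (H t (or_intror Ht)) Hyt) as [_ [_ [r2 _]]].
    congruence.
Qed.

Let informable := flat_map (ignorant_nbrs c) (spreaders c).

Lemma in_informable y : In y informable <->
  exists s, In s (spreaders c) /\ In y (nbrs s) /\ ~ informed c y.
Proof.
  unfold informable. rewrite in_flat_map. unfold ignorant_nbrs.
  setoid_rewrite filter_In. setoid_rewrite eqb_eta_ignorant. firstorder.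
Qed.

Lemma candidates_support x : rate c x <> 0%nat ->
  (In x (candidates c) <-> In x (spreaders c ++ informable)).
Proof.
  intros Hr. unfold candidates. rewrite nodup_In, !in_app_iff, in_informable, in_flat_map.
  split.
  - intros [Hx|[s [Hs Hx]]]; auto.
    destruct (in_dec veq_dec x (spreaders c)) as [i|ni]; auto.
    destruct (in_dec veq_dec x (stiflers c)) as [j|nj].
    + exfalso. apply Hr, rate_stifler; auto.
    + right. exists s. unfold informed. tauto.
  - intros [Hx|[s [Hs [Hx _]]]]; eauto.
Qed.

(** Every transition is either a spreader becoming a stifler (rate [3 - n_ignorant])
    or an ignorant child of a spreader becoming a spreader (rate 1). *)
Lemma sumR_rate_decomp h :
  sumR (candidates c) (fun x => INR (rate c x) * h x) =
  sumR (spreaders c) (fun s => (3 - INR (n_ignorant c s)) * h s + sumR (ignorant_nbrs c s) h).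
Proof.
  assert (Hby : forall y, In y informable -> ~ informed c y /\ In (removelast y) (spreaders c)).
  { intros y Hy. apply in_flat_map in Hy. destruct Hy as [s [Hs Hy]].
    destruct (ignorant_nbrs_spec s y (or_introl Hs) Hy) as [? [_ [r _]]]. rewrite r; auto. }
  rewrite (sumR_eq_on_support (fun x => negb (Nat.eqb (rate c x) 0)) _ (spreaders c ++ informable)).
  - rewrite sumR_app, sumR_plus. f_equal.
    + apply sumR_ext_in. intros s Hs. rewrite rate_spreader; auto.
    + unfold informable. rewrite sumR_flat_map. apply sumR_ext_in. intros s Hs.
      apply sumR_ext_in. intros y Hy.
      destruct (Hby y) as [H1 H2]; [apply in_flat_map; eauto|].
      rewrite rate_ignorant by auto. destruct in_dec; [simpl; lra | tauto].
  - apply NoDup_nodup.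
  - apply NoDup_app.
    + apply (wf_NoDup_spreaders c Hc).
    + apply NoDup_flat_map_ignorant_nbrs; [apply (wf_NoDup_spreaders c Hc) | intros; left; auto].
    + intros a Ha HaL. apply (Hby a HaL). left; auto.
  - intros x E. apply Bool.negb_false_iff, Nat.eqb_eq in E. rewrite E. simpl. lra.
  - intros x E. apply Bool.negb_true_iff, Nat.eqb_neq in E. apply candidates_support; auto.
Qed.

End WellFormed.

Section Flip.
Variable c : config.
Hypothesis Hc : wf c.

Lemma flip_spreader s : In s (spreaders c) ->
  flip c s = mkConfig (remove veq_dec s (spreaders c)) (s :: stiflers c).
Proof. intros H. unfold flip. rewrite (eta_spreader c s H). reflexivity. Qed.

Lemma flip_ignorant y : ~ informed c y -> flip c y = mkConfig (y :: spreaders c) (stiflers c).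
Proof. intros H. unfold flip. rewrite (eta_ignorant c y H). reflexivity. Qed.

Lemma informed_flip_spreader s x : In s (spreaders c) -> (informed (flip c s) x <-> informed c x).
Proof.
  intros Hs. rewrite flip_spreader by auto. unfold informed; simpl. split.
  - intros [H|[H|H]]; [apply in_remove in H | subst |]; tauto.
  - intros [H|H]; [|tauto]. destruct (veq_dec x s) as [->|ne]; [tauto|].
    left; apply in_in_remove; auto.
Qed.

Lemma informed_flip_ignorant y x : ~ informed c y ->
  (informed (flip c y) x <-> x = y \/ informed c x).
Proof. intros Hy. rewrite flip_ignorant by auto. unfold informed; simpl. intuition. Qed.

Lemma wf_flip_spreader s : In s (spreaders c) -> wf (flip c s).
Proof.
  intros Hs. constructor.
  - rewrite flip_spreader by auto. apply NoDup_remove_dec, (wf_NoDup_spreaders c Hc).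
  - rewrite flip_spreader by auto.
    constructor; [apply (wf_disjoint c Hc); auto | apply (wf_NoDup_stiflers c Hc)].
  - rewrite flip_spreader by auto. simpl. intros x Hx. apply in_remove in Hx.
    destruct Hx as [Hx ne]. intros [E|E]; [congruence|]. apply (wf_disjoint c Hc x); auto.
  - apply informed_flip_spreader, (wf_root c Hc); auto.
  - intros x Hx nx. apply informed_flip_spreader; auto. apply informed_flip_spreader in Hx; auto.
    apply (wf_parent c Hc); auto.
Qed.

Lemma wf_flip_ignorant s y : In s (spreaders c) -> In y (ignorant_nbrs c s) -> wf (flip c y).
Proof.
  intros Hs Hy. destruct (ignorant_nbrs_spec c Hc s y (or_introl Hs) Hy) as [Hiy [_ [r _]]].
  constructor.
  - rewrite flip_ignorant by auto.
    constructor; [intros H; apply Hiy; left; auto | apply (wf_NoDup_spreaders c Hc)].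
  - rewrite flip_ignorant by auto. apply (wf_NoDup_stiflers c Hc).
  - rewrite flip_ignorant by auto. simpl. intros x [<-|Hx].
    + intros H; apply Hiy; right; auto.
    + apply (wf_disjoint c Hc); auto.
  - apply informed_flip_ignorant; auto. right. apply (wf_root c Hc).
  - intros x Hx nx. apply informed_flip_ignorant; auto. apply informed_flip_ignorant in Hx; auto.
    right. destruct Hx as [->|Hx].
    + rewrite r; left; auto.
    + apply (wf_parent c Hc); auto.
Qed.

Lemma wf_flip x : In x (candidates c) -> rate c x <> 0%nat -> wf (flip c x).
Proof.
  intros Hx Hr. unfold candidates in Hx. rewrite nodup_In, in_app_iff in Hx.
  destruct (in_dec veq_dec x (spreaders c)) as [i|ni]; [apply wf_flip_spreader; auto|].
  destruct Hx as [Hx|Hx]; [tauto|]. apply in_flat_map in Hx. destruct Hx as [s [Hs Hx]].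
  destruct (in_dec veq_dec x (stiflers c)) as [j|nj].
  - exfalso; apply Hr, rate_stifler; auto.
  - apply (wf_flip_ignorant s); auto. apply filter_In. split; auto.
    apply eqb_eta_ignorant. unfold informed; tauto.
Qed.

Lemma n_ignorant_flip_spreader s t : In s (spreaders c) -> n_ignorant (flip c s) t = n_ignorant c t.
Proof.
  intros Hs. unfold n_ignorant, ignorant_nbrs. f_equal. apply filter_ext. intros z.
  apply Bool.eq_iff_eq_true. rewrite !eqb_eta_ignorant, (informed_flip_spreader s z Hs). tauto.
Qed.

Lemma eqb_eta_flip_ignorant y z : ~ informed c y ->
  Z.eqb (eta (flip c y) z) (-1) =
  andb (Z.eqb (eta c z) (-1)) (if veq_dec z y then false else true).
Proof.
  intros Hy. apply Bool.eq_iff_eq_true.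
  rewrite Bool.andb_true_iff, !eqb_eta_ignorant, (informed_flip_ignorant y z Hy).
  destruct veq_dec; intuition discriminate.
Qed.

Section Inform.
Variables s y : vertex.
Hypothesis Hs : In s (spreaders c).
Hypothesis Hy : In y (ignorant_nbrs c s).

Lemma n_ignorant_inform_other t : In t (spreaders c) -> t <> s ->
  n_ignorant (flip c y) t = n_ignorant c t.
Proof.
  intros Ht ne. destruct (ignorant_nbrs_spec c Hc s y (or_introl Hs) Hy) as [Hiy [_ [r _]]].
  unfold n_ignorant, ignorant_nbrs. f_equal. apply filter_ext_in. intros z Hz.
  rewrite eqb_eta_flip_ignorant by auto. destruct veq_dec as [->|nz]; [|apply Bool.andb_true_r].
  exfalso. apply ne. destruct (ignorant_nbrs_spec c Hc t y (or_introl Ht)) as [_ [_ [r' _]]].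
  - apply filter_In. split; auto. apply eqb_eta_ignorant; auto.
  - congruence.
Qed.

Lemma n_ignorant_inform_parent : S (n_ignorant (flip c y) s) = n_ignorant c s.
Proof.
  destruct (ignorant_nbrs_spec c Hc s y (or_introl Hs) Hy) as [Hiy _].
  unfold n_ignorant, ignorant_nbrs.
  rewrite <- (length_filter_remove_one veq_dec (fun z => Z.eqb (eta c z) (-1)) (nbrs s) y)
    by (auto; apply NoDup_nbrs).
  do 2 f_equal. apply filter_ext. intros z. apply eqb_eta_flip_ignorant; auto.
Qed.

Lemma n_ignorant_inform_new : n_ignorant (flip c y) y = 2%nat.
Proof.
  destruct (ignorant_nbrs_spec c Hc s y (or_introl Hs) Hy) as [Hiy [_ [r _]]].
  pose proof (ignorant_nonroot c Hc y Hiy) as ny.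
  unfold n_ignorant, ignorant_nbrs. rewrite nbrs_nonroot by auto. simpl filter.
  rewrite !eqb_eta_flip_ignorant, r, (eta_spreader c s Hs) by auto. simpl.
  assert (Hch : forall b, In (y ++ [b]) (children y) -> (Z.eqb (eta c (y ++ [b])) (-1) &&
            (if veq_dec (y ++ [b]) y then false else true))%bool = true).
  { intros b Hb. destruct veq_dec as [E|_].
    - exfalso. apply (f_equal (@length nat)) in E. rewrite length_app in E. simpl in E. lia.
    - rewrite Bool.andb_true_r. apply eqb_eta_ignorant, (children_ignorant c Hc y); auto. }
  destruct y as [|a y']; [congruence|].
  rewrite !Hch by (simpl; auto). reflexivity.
Qed.

End Inform.
End Flip.

(** * Two harmonic functions of the jump chain *)

Definition g (s : R) : R := 1/3 + 4/9 * s + 2/9 * s ^ 2.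

Fixpoint beta (m : nat) : R := match m with O => 0 | S m' => g (beta m') end.

(** [phi i m] is the probability that a spreader at depth [n - m] with [i] ignorant
    children never creates a stifler below depth [n]: each of its contacts hits one
    of its three neighbours uniformly, and an informed child starts an independent
    copy of the process, which succeeds with probability [beta m = phi 2 (m - 1)]. *)
Fixpoint phi (i m : nat) : R :=
  match i with
  | O => 1
  | S i' => (3 - INR (S i') + INR (S i') * phi i' m * beta m) / 3
  end.

Definition psi (n d i : nat) : R := if Nat.leb d n then phi i (n - d) else 0.

Definition p_good (n : nat) (c : config) : R :=
  if good n c then prodR (spreaders c) (fun s => psi n (depth s) (n_ignorant c s)) else 0.

(** [mean_jumps i] is the expected number of jumps caused by a spreader with [i]
    ignorant children and its descendants; [mean_jumps 2 = 17]. *)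
Fixpoint mean_jumps (i : nat) : R :=
  match i with O => 1 | S i' => (3 + INR (S i') * (mean_jumps i' + 17)) / 3 end.

Definition jumps_bound (c : config) : R :=
  sumR (spreaders c) (fun s => mean_jumps (n_ignorant c s)).

Lemma phi_2 m : phi 2 m = g (beta m).
Proof. simpl. unfold g. field. Qed.

Lemma mean_jumps_2 : mean_jumps 2 = 17.
Proof. simpl. field. Qed.

Lemma psi_S n d i :
  3 * psi n d (S i) =
  (3 - INR (S i)) * (if Nat.leb d n then 1 else 0) + INR (S i) * psi n d i * psi n (S d) 2.
Proof.
  unfold psi. destruct (Nat.leb d n) eqn:E1; [|lra].
  apply Nat.leb_le in E1. replace (if Nat.leb (S d) n then phi 2 (n - S d) else 0) with (beta (n - d)).
  - change (phi (S i) (n - d)) with ((3 - INR (S i) + INR (S i) * phi i (n - d) * beta (n - d)) / 3).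
    lra.
  - destruct (Nat.leb (S d) n) eqn:E2.
    + apply Nat.leb_le in E2. replace (n - d)%nat with (S (n - S d)) by lia. rewrite phi_2. reflexivity.
    + apply Nat.leb_gt in E2. replace (n - d)%nat with 0%nat by lia. reflexivity.
Qed.

Lemma beta_in_01 m : 0 <= beta m <= 1.
Proof. induction m; simpl; [lra|]. unfold g. nra. Qed.

Lemma phi_in_01 i m : (i <= 3)%nat -> 0 <= phi i m <= 1.
Proof.
  induction i as [|i IH]; intros Hi; [simpl; lra|].
  change (phi (S i) m) with ((3 - INR (S i) + INR (S i) * phi i m * beta m) / 3).
  pose proof (IH ltac:(lia)). pose proof (beta_in_01 m).
  assert (INR (S i) <= 3) by (replace 3 with (INR 3) by (simpl; lra); apply le_INR; auto).
  pose proof (pos_INR (S i)).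
  assert (0 <= phi i m * beta m <= 1) by nra.
  assert (0 <= INR (S i) * (phi i m * beta m) <= INR (S i)) by nra.
  rewrite Rmult_assoc. lra.
Qed.

Lemma p_good_in_01 n c : 0 <= p_good n c <= 1.
Proof.
  unfold p_good. destruct good; [|lra]. apply prodR_in_01. intros s _. unfold psi.
  destruct Nat.leb; [apply phi_in_01, n_ignorant_le | lra].
Qed.

Lemma mean_jumps_nonneg i : 0 <= mean_jumps i.
Proof.
  induction i; [simpl; lra|].
  change (mean_jumps (S i)) with ((3 + INR (S i) * (mean_jumps i + 17)) / 3).
  pose proof (pos_INR (S i)). apply Rmult_le_pos; [nra | lra].
Qed.

Lemma jumps_bound_nonneg c : 0 <= jumps_bound c.
Proof. apply sumR_nonneg. intros; apply mean_jumps_nonneg. Qed.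

Section Harmonic.
Variable c : config.
Hypothesis Hc : wf c.
Variable s : vertex.
Hypothesis Hs : In s (spreaders c).

Lemma p_good_local n :
  (3 - INR (n_ignorant c s)) * p_good n (flip c s) +
  sumR (ignorant_nbrs c s) (fun y => p_good n (flip c y)) = 3 * p_good n c.
Proof.
  set (rest := prodR (remove veq_dec s (spreaders c)) (fun t => psi n (depth t) (n_ignorant c t))).
  assert (Hnd := wf_NoDup_spreaders c Hc).
  assert (Hgood : good n (flip c s) = andb (Nat.leb (depth s) n) (good n c))
    by (rewrite flip_spreader by auto; reflexivity).
  assert (Hstifle : p_good n (flip c s) =
                    if good n c then (if Nat.leb (depth s) n then 1 else 0) * rest else 0).
  { unfold p_good. rewrite Hgood.
    destruct (good n c), (Nat.leb (depth s) n); simpl; try lra.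
    rewrite flip_spreader at 1 by auto. unfold rest. rewrite Rmult_1_l.
    apply prodR_ext_in. intros t _. rewrite n_ignorant_flip_spreader; auto. }
  assert (Hinform : forall y, In y (ignorant_nbrs c s) -> p_good n (flip c y) =
    if good n c then psi n (S (depth s)) 2 * psi n (depth s) (pred (n_ignorant c s)) * rest else 0).
  { intros y Hy. destruct (ignorant_nbrs_spec c Hc s y (or_introl Hs) Hy) as [Hiy [_ [_ dy]]].
    assert (Hg : good n (flip c y) = good n c) by (rewrite flip_ignorant; auto).
    unfold p_good. rewrite Hg. destruct (good n c); [|reflexivity].
    rewrite flip_ignorant at 1 by auto. simpl prodR.
    rewrite (prodR_remove veq_dec (spreaders c) s) by auto.
    rewrite (n_ignorant_inform_new c Hc s y), dy, <- (n_ignorant_inform_parent c Hc s y) by auto.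
    rewrite Rmult_assoc. do 2 f_equal. unfold rest. apply prodR_ext_in. intros t Ht.
    apply in_remove in Ht. destruct Ht as [Ht ne]. rewrite (n_ignorant_inform_other c Hc s y); auto. }
  rewrite (sumR_ext_in _ _ _ Hinform), sumR_const, Hstifle. fold (n_ignorant c s).
  unfold p_good. rewrite (prodR_remove veq_dec (spreaders c) s) by auto. fold rest.
  destruct (good n c); [|lra].
  destruct (n_ignorant c s) as [|i].
  - unfold psi. simpl INR. destruct (Nat.leb (depth s) n); simpl; lra.
  - simpl pred. rewrite Rmult_assoc, <- (Rmult_assoc 3), psi_S. ring.
Qed.

Lemma jumps_bound_local :
  (3 - INR (n_ignorant c s)) * jumps_bound (flip c s) +
  sumR (ignorant_nbrs c s) (fun y => jumps_bound (flip c y)) = 3 * (jumps_bound c - 1).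
Proof.
  set (rest := sumR (remove veq_dec s (spreaders c)) (fun t => mean_jumps (n_ignorant c t))).
  assert (Hnd := wf_NoDup_spreaders c Hc).
  assert (Hstifle : jumps_bound (flip c s) = rest).
  { unfold jumps_bound. rewrite flip_spreader at 1 by auto. apply sumR_ext_in.
    intros t _. rewrite n_ignorant_flip_spreader; auto. }
  assert (Hinform : forall y, In y (ignorant_nbrs c s) ->
     jumps_bound (flip c y) = 17 + mean_jumps (pred (n_ignorant c s)) + rest).
  { intros y Hy. destruct (ignorant_nbrs_spec c Hc s y (or_introl Hs) Hy) as [Hiy _].
    unfold jumps_bound. rewrite flip_ignorant at 1 by auto. simpl sumR.
    rewrite (sumR_remove veq_dec (spreaders c) s) by auto.
    rewrite (n_ignorant_inform_new c Hc s y), mean_jumps_2,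
      <- (n_ignorant_inform_parent c Hc s y) by auto.
    enough (sumR (remove veq_dec s (spreaders c)) (fun t => mean_jumps (n_ignorant (flip c y) t)) = rest)
      by (simpl pred; lra).
    apply sumR_ext_in. intros t Ht. apply in_remove in Ht. destruct Ht as [Ht ne].
    rewrite (n_ignorant_inform_other c Hc s y); auto. }
  rewrite (sumR_ext_in _ _ _ Hinform), sumR_const, Hstifle. fold (n_ignorant c s).
  unfold jumps_bound. rewrite (sumR_remove veq_dec (spreaders c) s) by auto. fold rest.
  destruct (n_ignorant c s) as [|i]; simpl pred; [simpl; lra|].
  change (mean_jumps (S i)) with ((3 + INR (S i) * (mean_jumps i + 17)) / 3). lra.
Qed.

End Harmonic.

Definition step (c : config) (h : config -> R) : R :=
  sumR (candidates c) (fun x => INR (rate c x) / INR (total_rate c) * h (flip c x)).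

(** [alive k c]: probability that the chain started at [c] is not absorbed at jump [k]. *)
Fixpoint alive (k : nat) (c : config) : R :=
  if Nat.eqb (total_rate c) 0 then 0 else
  match k with O => 1 | S k' => step c (alive k') end.

(** [jumps k c]: expected number of jumps among the first [k]. *)
Fixpoint jumps (k : nat) (c : config) : R :=
  match k with
  | O => 0
  | S k' => if Nat.eqb (total_rate c) 0 then 0 else 1 + step c (jumps k')
  end.

Lemma q_S k n c : q (S k) n c =
  if good n c then (if Nat.eqb (total_rate c) 0 then 1 else step c (q k n)) else 0.
Proof. reflexivity. Qed.

Section Step.
Variable c : config.
Hypothesis Hc : wf c.

Lemma total_rate_spreaders : INR (total_rate c) = 3 * INR (length (spreaders c)).
Proof.
  rewrite total_rate_sumR.
  rewrite (sumR_ext_in _ _ (fun x => INR (rate c x) * 1)) by (intros; lra).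
  rewrite sumR_rate_decomp by auto.
  rewrite (sumR_ext_in _ _ (fun _ => 3)), sumR_const; [lra|].
  intros s _. rewrite sumR_const. fold (n_ignorant c s). lra.
Qed.

Lemma total_rate_0 : total_rate c = 0%nat -> spreaders c = [].
Proof.
  intros T. pose proof total_rate_spreaders as H. rewrite T in H.
  destruct (spreaders c) as [|s l]; auto. simpl length in H. rewrite S_INR in H.
  pose proof (pos_INR (length l)). simpl in H. lra.
Qed.

Lemma step_le h1 h2 : (forall c', wf c' -> h1 c' <= h2 c') -> step c h1 <= step c h2.
Proof.
  intros H. apply sumR_le. intros x Hx. destruct (Nat.eq_dec (rate c x) 0) as [e|ne].
  - rewrite e. simpl INR. unfold Rdiv. lra.
  - apply Rmult_le_compat_l; [|apply H, wf_flip; auto].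
    destruct (total_rate c); [simpl; unfold Rdiv; rewrite Rinv_0; lra|].
    apply Rdiv_le_0_compat; [apply pos_INR | apply lt_0_INR; lia].
Qed.

Lemma step_ext h1 h2 : (forall c', wf c' -> h1 c' = h2 c') -> step c h1 = step c h2.
Proof. intros H. apply Rle_antisym; apply step_le; intros; rewrite H; auto; lra. Qed.

Lemma step_plus h1 h2 : step c (fun c' => h1 c' + h2 c') = step c h1 + step c h2.
Proof. unfold step. rewrite <- sumR_plus. apply sumR_ext_in. intros. ring. Qed.

Section Active.
Hypothesis Hact : total_rate c <> 0%nat.

Lemma length_spreaders_pos : 0 < INR (length (spreaders c)).
Proof.
  apply lt_0_INR. destruct (spreaders c) eqn:E; simpl; [|lia].
  exfalso. apply Hact. apply INR_eq. rewrite total_rate_spreaders, E. simpl. lra.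
Qed.

Lemma step_scaled h :
  step c h = sumR (candidates c) (fun x => INR (rate c x) * h (flip c x)) /
             (3 * INR (length (spreaders c))).
Proof.
  unfold step, Rdiv. rewrite <- total_rate_spreaders, Rmult_comm, <- sumR_scal_l.
  apply sumR_ext_in. intros. ring.
Qed.

Lemma step_const a : step c (fun _ => a) = a.
Proof.
  rewrite step_scaled, sumR_rate_decomp by auto.
  rewrite (sumR_ext_in _ _ (fun _ => 3 * a)), sumR_const.
  - field. pose proof length_spreaders_pos. lra.
  - intros s _. rewrite sumR_const. fold (n_ignorant c s). lra.
Qed.

Lemma step_p_good n : step c (p_good n) = p_good n c.
Proof.
  rewrite step_scaled, sumR_rate_decomp by auto.
  rewrite (sumR_ext_in _ _ (fun _ => 3 * p_good n c)), sumR_const.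
  - field. pose proof length_spreaders_pos. lra.
  - intros s Hs. apply p_good_local; auto.
Qed.

Lemma step_jumps_bound : step c jumps_bound = jumps_bound c - 1.
Proof.
  rewrite step_scaled, sumR_rate_decomp by auto.
  rewrite (sumR_ext_in _ _ (fun _ => 3 * (jumps_bound c - 1))), sumR_const.
  - field. pose proof length_spreaders_pos. lra.
  - intros s Hs. apply jumps_bound_local; auto.
Qed.

End Active.
End Step.

Lemma alive_in_01 k c : wf c -> 0 <= alive k c <= 1.
Proof.
  revert c; induction k; intros c Hc; simpl alive;
    destruct (Nat.eqb (total_rate c) 0) eqn:T; try lra.
  apply Nat.eqb_neq in T.
  rewrite <- (step_const c Hc T 0), <- (step_const c Hc T 1).
  split; apply step_le; auto; intros; apply IHk; auto.
Qed.

Lemma alive_S_le k c : wf c -> alive (S k) c <= alive k c.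
Proof.
  revert c; induction k; intros c Hc; simpl alive;
    destruct (Nat.eqb (total_rate c) 0) eqn:T; try lra.
  - apply Nat.eqb_neq in T. apply Rle_trans with (step c (fun _ => 1)).
    + apply step_le; auto. intros; apply (alive_in_01 0); auto.
    + rewrite step_const; auto; lra.
  - apply step_le; auto.
Qed.

Lemma jumps_S k c : wf c -> jumps (S k) c = jumps k c + alive k c.
Proof.
  revert c; induction k; intros c Hc.
  - simpl. destruct Nat.eqb eqn:T; [lra|]. apply Nat.eqb_neq in T.
    rewrite (step_const c Hc T 0). lra.
  - change (jumps (S (S k)) c) with
      (if Nat.eqb (total_rate c) 0 then 0 else 1 + step c (jumps (S k))).
    simpl jumps at 2. simpl alive. destruct Nat.eqb; [lra|].
    rewrite (step_ext c Hc _ _ IHk), step_plus. lra.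
Qed.

(** [jumps_bound] decreases by one at each jump of the chain: a Lyapunov function. *)
Lemma jumps_le_bound k c : wf c -> jumps k c <= jumps_bound c.
Proof.
  revert c; induction k; intros c Hc; simpl jumps; [apply jumps_bound_nonneg|].
  destruct Nat.eqb eqn:T; [apply jumps_bound_nonneg|]. apply Nat.eqb_neq in T.
  pose proof (step_jumps_bound c Hc T). pose proof (step_le c Hc _ _ IHk). lra.
Qed.

Lemma alive_le_bound k c : wf c -> INR (S k) * alive k c <= jumps_bound c.
Proof.
  intros Hc. eapply Rle_trans; [|apply (jumps_le_bound (S k) c Hc)].
  induction k; rewrite jumps_S by auto; [simpl; lra|].
  rewrite S_INR. pose proof (alive_S_le k c Hc). pose proof (alive_in_01 (S k) c Hc).
  pose proof (pos_INR (S k)). nra.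
Qed.

(** [q k n] can differ from the harmonic [p_good n] only on paths not absorbed at jump [k]. *)
Lemma q_between n k c : wf c -> p_good n c <= q k n c <= p_good n c + alive k c.
Proof.
  revert c; induction k; intros c Hc.
  - pose proof (p_good_in_01 n c). pose proof (alive_in_01 0 c Hc).
    simpl q. simpl alive in *. unfold p_good in *. destruct (good n c); [|lra].
    destruct Nat.eqb eqn:T; [|lra]. apply Nat.eqb_eq in T. rewrite (total_rate_0 c Hc T). simpl. lra.
  - rewrite q_S. pose proof (alive_in_01 (S k) c Hc).
    unfold p_good at 1 2. destruct (good n c) eqn:Gd; [|lra].
    simpl alive. destruct Nat.eqb eqn:T.
    + apply Nat.eqb_eq in T. rewrite (total_rate_0 c Hc T). simpl. lra.
    + apply Nat.eqb_neq in T.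
      assert (Hpg : p_good n c = prodR (spreaders c) (fun s => psi n (depth s) (n_ignorant c s)))
        by (unfold p_good; rewrite Gd; auto).
      rewrite <- Hpg, <- (step_p_good c Hc T n), <- step_plus.
      split; apply step_le; auto; intros; apply IHk; auto.
Qed.

(** * The distribution of the range *)

Lemma wf_init : wf init.
Proof.
  constructor; simpl.
  - repeat constructor; simpl; tauto.
  - constructor.
  - tauto.
  - left; left; reflexivity.
  - intros x [[<-|[]]|[]] H; exfalso; apply H; reflexivity.
Qed.

Lemma p_good_init n : p_good n init = phi 3 n.
Proof.
  unfold p_good, psi. change (good n init) with true. change (n_ignorant init root) with 3%nat.
  simpl. rewrite Nat.sub_0_r. ring.
Qed.

Lemma is_lim_seq_inv_S : is_lim_seq (fun k => / INR (S k)) 0.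
Proof.
  apply (is_lim_seq_incr_1 (fun k => / INR k)).
  replace (Finite 0) with (Rbar_inv p_infty) by reflexivity.
  apply is_lim_seq_inv; [apply is_lim_seq_INR | discriminate].
Qed.

Lemma is_lim_seq_q_init n : is_lim_seq (fun k => q k n init) (phi 3 n).
Proof.
  rewrite <- p_good_init.
  apply is_lim_seq_le_le with (u := fun _ => p_good n init)
    (w := fun k => p_good n init + jumps_bound init * / INR (S k)).
  - intros k. pose proof (q_between n k init wf_init). pose proof (alive_le_bound k init wf_init).
    assert (0 < INR (S k)) by (apply lt_0_INR; lia).
    enough (alive k init <= jumps_bound init * / INR (S k)) by lra.
    apply (Rmult_le_reg_l (INR (S k))); auto.
    rewrite <- Rmult_assoc, (Rmult_comm _ (jumps_bound init)), Rmult_assoc, Rinv_r; lra.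
  - apply is_lim_seq_const.
  - pose proof (is_lim_seq_scal_l _ (jumps_bound init) _ is_lim_seq_inv_S) as H.
    pose proof (is_lim_seq_plus' _ _ _ _ (is_lim_seq_const (p_good n init)) H) as L.
    simpl in L. rewrite Rmult_0_r, Rplus_0_r in L. exact L.
Qed.

Lemma P_R_le_beta n : P_R_le n = beta n * g (beta n).
Proof.
  unfold P_R_le. rewrite (is_lim_seq_unique _ _ (is_lim_seq_q_init n)).
  change (phi 3 n) with ((3 - INR 3 + INR 3 * phi 2 n * beta n) / 3).
  rewrite phi_2. simpl. field.
Qed.

(** * Bounds on [beta] *)

Lemma pow_8_9_in_01 n : 0 < (8/9) ^ n <= 1.
Proof. split; [apply pow_lt; lra | rewrite <- (pow1 n); apply pow_incr; lra]. Qed.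

Lemma alpha1_eq n : alpha1 n = 1 - 4 * (8/9) ^ n / (13 - 9 * (8/9) ^ n).
Proof. unfold alpha1. pose proof (pow_8_9_in_01 n). field. lra. Qed.

Lemma alpha2_eq n : alpha2 n = 1 - (8/9) ^ n / (4 - 3 * (8/9) ^ n).
Proof. unfold alpha2. pose proof (pow_8_9_in_01 n). field. lra. Qed.

Lemma alpha1_in_01 n : 0 <= alpha1 n <= 1.
Proof.
  rewrite alpha1_eq. pose proof (pow_8_9_in_01 n). set (x := (8/9) ^ n) in *.
  assert (0 <= 4 * x / (13 - 9 * x) <= 1); [|lra].
  split; [apply Rdiv_le_0_compat; lra|]. apply Rcomplements.Rle_div_l; lra.
Qed.

Lemma alpha2_in_01 n : 0 <= alpha2 n <= 1.
Proof.
  rewrite alpha2_eq. pose proof (pow_8_9_in_01 n). set (x := (8/9) ^ n) in *.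
  assert (0 <= x / (4 - 3 * x) <= 1); [|lra].
  split; [apply Rdiv_le_0_compat; lra|]. apply Rcomplements.Rle_div_l; lra.
Qed.

(** [alpha1] and [alpha2] are the orbits of [0] under two Möbius maps bracketing [g]. *)
Definition mobius1 (s : R) : R := (13 + 23 * s) / (9 * (5 - s)).
Definition mobius2 (s : R) : R := (4 + 5 * s) / (3 * (4 - s)).

Lemma alpha1_S n : alpha1 (S n) = mobius1 (alpha1 n).
Proof.
  rewrite !alpha1_eq. unfold mobius1. simpl pow. pose proof (pow_8_9_in_01 n).
  set (x := (8/9) ^ n) in *. field. repeat split; lra.
Qed.

Lemma alpha2_S n : alpha2 (S n) = mobius2 (alpha2 n).
Proof.
  rewrite !alpha2_eq. unfold mobius2. simpl pow. pose proof (pow_8_9_in_01 n).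
  set (x := (8/9) ^ n) in *. field. repeat split; lra.
Qed.

Lemma g_le a b : 0 <= a <= b -> g a <= g b.
Proof. intros. unfold g. nra. Qed.

Lemma mobius1_le_g s : 0 <= s <= 1 -> mobius1 s <= g s.
Proof.
  intros. unfold mobius1, g. apply Rcomplements.Rle_div_l; [lra|].
  assert (0 <= (1 - s) * ((1 - s) * (1 - s))) by (apply Rmult_le_pos; nra). nra.
Qed.

Lemma g_le_mobius2 s : 0 <= s <= 1 -> g s <= mobius2 s.
Proof.
  intros. unfold mobius2, g. apply Rcomplements.Rle_div_r; [lra|].
  assert (0 <= s * ((s - 1) * (s - 1))) by (apply Rmult_le_pos; nra). nra.
Qed.

Lemma alpha1_le_beta n : alpha1 n <= beta n.
Proof.
  induction n; [unfold alpha1; simpl; lra|].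
  simpl beta. rewrite alpha1_S. pose proof (beta_in_01 n). pose proof (alpha1_in_01 n).
  apply Rle_trans with (g (alpha1 n)); [apply mobius1_le_g; auto | apply g_le; lra].
Qed.

Lemma beta_le_alpha2 n : beta n <= alpha2 n.
Proof.
  induction n; [pose proof (alpha2_in_01 0); simpl beta; lra|].
  simpl beta. rewrite alpha2_S. pose proof (beta_in_01 n). pose proof (alpha2_in_01 n).
  apply Rle_trans with (g (alpha2 n)); [apply g_le; lra | apply g_le_mobius2; auto].
Qed.

Lemma mul_g_expand s : s * g s = 3/9 * s + 4/9 * s ^ 2 + 2/9 * s ^ 3.
Proof. unfold g. field. Qed.

Lemma P_R_le_bounds n :
  alpha1 n * g (alpha1 n) <= P_R_le n <= alpha2 n * g (alpha2 n).
Proof.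
  rewrite P_R_le_beta. pose proof (alpha1_in_01 n). pose proof (alpha2_in_01 n).
  pose proof (alpha1_le_beta n). pose proof (beta_le_alpha2 n). pose proof (beta_in_01 n).
  assert (Hmono : forall a b, 0 <= a <= b -> a * g a <= b * g b).
  { intros a b Hab. pose proof (g_le a b Hab). assert (0 <= g a) by (unfold g; pose proof (pow2_ge_0 a); lra). nra. }
  split; apply Hmono; lra.
Qed.

(** * The mean range *)

Definition tail_poly (e : R) : R := 17/9 * e - 10/9 * e ^ 2 + 2/9 * e ^ 3.

Lemma tail_poly_le a b : a <= b -> tail_poly a <= tail_poly b.
Proof.
  intros Hab.
  assert (E : tail_poly b - tail_poly a =
              (b - a) * ((3/2 * (a + b - 10/3) ^ 2 + 1/3 + 1/2 * (a - b) ^ 2) / 9))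
    by (unfold tail_poly; field).
  pose proof (pow2_ge_0 (a + b - 10/3)). pose proof (pow2_ge_0 (a - b)).
  assert (0 <= (b - a) * ((3/2 * (a + b - 10/3) ^ 2 + 1/3 + 1/2 * (a - b) ^ 2) / 9))
    by (apply Rmult_le_pos; lra).
  lra.
Qed.

Lemma tail_poly_nonneg e : 0 <= e -> 0 <= tail_poly e.
Proof. intros. replace 0 with (tail_poly 0) by (unfold tail_poly; ring). apply tail_poly_le; auto. Qed.

Lemma tail_poly_le_linear e : 0 <= e <= 5 -> tail_poly e <= 17/9 * e.
Proof.
  intros. unfold tail_poly. assert (0 <= e * e * (10 - 2 * e)) by (apply Rmult_le_pos; nra).
  replace (e ^ 2) with (e * e) by ring. replace (e ^ 3) with (e * e * e) by ring. lra.
Qed.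

Lemma tail_eq n : 1 - P_R_le n = tail_poly (1 - beta n).
Proof. rewrite P_R_le_beta. unfold tail_poly, g. field. Qed.

Lemma tail_nonneg n : 0 <= 1 - P_R_le n.
Proof. rewrite tail_eq. apply tail_poly_nonneg. pose proof (beta_in_01 n). lra. Qed.

Lemma tail_lower n : tail_poly ((8/9) ^ n / (4 - 3 * (8/9) ^ n)) <= 1 - P_R_le n.
Proof. rewrite tail_eq. apply tail_poly_le. pose proof (beta_le_alpha2 n). rewrite alpha2_eq in H. lra. Qed.

Lemma tail_upper n : 1 - P_R_le n <= tail_poly (4 * (8/9) ^ n / (13 - 9 * (8/9) ^ n)).
Proof. rewrite tail_eq. apply tail_poly_le. pose proof (alpha1_le_beta n). rewrite alpha1_eq in H. lra. Qed.

Lemma tail_le_geom n : 1 - P_R_le n <= 17/9 * (8/9) ^ n.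
Proof.
  eapply Rle_trans; [apply tail_upper|]. pose proof (pow_8_9_in_01 n). set (x := (8/9) ^ n) in *.
  assert (0 <= 4 * x / (13 - 9 * x) <= x).
  { split; [apply Rdiv_le_0_compat; lra|]. apply Rcomplements.Rle_div_l; nra. }
  eapply Rle_trans; [apply tail_poly_le_linear; lra | lra].
Qed.

Fixpoint poly_from (k : nat) (cs : list R) (x : R) : R :=
  match cs with [] => 0 | c :: cs' => c * x ^ k + poly_from (S k) cs' x end.
Fixpoint geom_poly_sum (k : nat) (cs : list R) : R :=
  match cs with [] => 0 | c :: cs' => c / (1 - (8/9) ^ k) + geom_poly_sum (S k) cs' end.

Lemma is_series_geom_pow k : (1 <= k)%nat -> is_series (fun n => ((8/9) ^ n) ^ k) (/ (1 - (8/9) ^ k)).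
Proof.
  intros Hk. apply (is_series_ext (fun n => ((8/9) ^ k) ^ n)).
  - intros n. rewrite <- !pow_mult. f_equal. lia.
  - apply is_series_geom. rewrite Rabs_pos_eq by (apply pow_le; lra).
    destruct k as [|k]; [lia|]. simpl. pose proof (pow_8_9_in_01 k). nra.
Qed.

Lemma is_series_poly_from k cs :
  (1 <= k)%nat -> is_series (fun n => poly_from k cs ((8/9) ^ n)) (geom_poly_sum k cs).
Proof.
  revert k; induction cs as [|c cs IH]; intros k Hk; simpl.
  - pose proof (is_series_scal_r 0 _ _ (is_series_geom_pow k Hk)) as H.
    rewrite Rmult_0_r in H. apply (is_series_ext _ _ _ (fun n => Rmult_0_r _) H).
  - pose proof (is_series_plus _ _ _ _ (is_series_scal_r c _ _ (is_series_geom_pow k Hk))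
                  (IH (S k) ltac:(lia))) as H.
    replace (c / (1 - (8/9) ^ k)) with (/ (1 - (8/9) ^ k) * c) by (unfold Rdiv; ring).
    apply (is_series_ext _ _ _ (fun n => f_equal2 Rplus (Rmult_comm _ c) eq_refl) H).
Qed.

(** A truncation of the series [x / (4 - 3x) = (x/4) sum_j (3x/4)^j]. *)
Definition lower_trunc (x : R) : R :=
  x/4 + 3/16 * x ^ 2 + 9/64 * x ^ 3 + 27/256 * x ^ 4 + 81/1024 * x ^ 5.
Definition upper_poly (x : R) : R :=
  4/13 * x + 36/169 * x ^ 2 + 324/2197 * x ^ 3 + 729/2197 * x ^ 4.

Lemma lower_trunc_bounds x : 0 < x <= 1 -> 0 <= lower_trunc x <= x / (4 - 3 * x).
Proof.
  intros H. pose proof (pow_le x 2). pose proof (pow_le x 3). pose proof (pow_le x 4).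
  pose proof (pow_le x 5). pose proof (pow_le x 6).
  split; [unfold lower_trunc; lra|]. apply Rcomplements.Rle_div_r; [lra|].
  replace (lower_trunc x * (4 - 3 * x)) with (x - 243/1024 * x ^ 6) by (unfold lower_trunc; field).
  lra.
Qed.

Lemma upper_poly_bound x : 0 < x <= 1 -> 4 * x / (13 - 9 * x) <= upper_poly x.
Proof.
  intros H. apply Rcomplements.Rle_div_l; [lra|].
  assert (0 <= x ^ 4 * (1 - x)) by (apply Rmult_le_pos; [apply pow_le|]; lra).
  replace (upper_poly x * (13 - 9 * x)) with (4 * x + 6561/2197 * (x ^ 4 * (1 - x)))
    by (unfold upper_poly; field). lra.
Qed.

(** The coefficients of [tail_poly (lower_trunc x)] and [tail_poly (upper_poly x)]. *)
Definition tail_lower_coeffs : list R :=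
  [17/36; 41/144; 95/576; 23/256; 45/1024; -195/2048; -405/8192; -729/32768;
   -891/131072; 729/524288; 10935/2097152; 10935/4194304; 19683/16777216;
   59049/134217728; 59049/536870912].
Definition tail_upper_coeffs : list R :=
  [68/117; 452/1521; 212/1521; 13965/28561; -103248/371293; -701136/4826809;
   -4443984/62748517; -72709002/815730721; 394447320/10604499373;
   216827928/10604499373; 114791256/10604499373; 86093442/10604499373].

Lemma tail_lower_poly n : 0 <= poly_from 1 tail_lower_coeffs ((8/9) ^ n) <= 1 - P_R_le n.
Proof.
  pose proof (pow_8_9_in_01 n) as Hx. pose proof (lower_trunc_bounds _ Hx).
  replace (poly_from 1 tail_lower_coeffs ((8/9) ^ n)) with (tail_poly (lower_trunc ((8/9) ^ n)))
    by (unfold tail_poly, lower_trunc; simpl; field).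
  split; [apply tail_poly_nonneg; lra|].
  eapply Rle_trans; [|apply tail_lower]. apply tail_poly_le; lra.
Qed.

Lemma tail_upper_poly n : 1 - P_R_le n <= poly_from 1 tail_upper_coeffs ((8/9) ^ n).
Proof.
  pose proof (pow_8_9_in_01 n) as Hx.
  replace (poly_from 1 tail_upper_coeffs ((8/9) ^ n)) with (tail_poly (upper_poly ((8/9) ^ n)))
    by (unfold tail_poly, upper_poly; simpl; field).
  eapply Rle_trans; [apply tail_upper|]. apply tail_poly_le, upper_poly_bound; auto.
Qed.

Lemma ex_series_tail : ex_series (fun n => 1 - P_R_le n).
Proof.
  apply (@ex_series_le R_AbsRing R_CompleteNormedModule _
           (fun n => poly_from 1 tail_upper_coeffs ((8/9) ^ n))).
  - intros n. change (norm (1 - P_R_le n)) with (Rabs (1 - P_R_le n)).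
    rewrite Rabs_pos_eq; [apply tail_upper_poly | apply tail_nonneg].
  - eexists. apply is_series_poly_from; lia.
Qed.

Definition mean_range : R := Series (fun n => 1 - P_R_le n).

Lemma mean_range_bounds : 6144/1000 <= mean_range <= 7448/1000.
Proof.
  split.
  - apply Rle_trans with (geom_poly_sum 1 tail_lower_coeffs); [simpl; lra|].
    rewrite <- (is_series_unique _ _ (is_series_poly_from 1 tail_lower_coeffs (le_n 1))).
    apply Series_le; [apply tail_lower_poly | apply ex_series_tail].
  - apply Rle_trans with (geom_poly_sum 1 tail_upper_coeffs); [|simpl; lra].
    rewrite <- (is_series_unique _ _ (is_series_poly_from 1 tail_upper_coeffs (le_n 1))).
    apply Series_le; [|eexists; apply is_series_poly_from; lia].
    intros n. split; [apply tail_nonneg | apply tail_upper_poly].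
Qed.

Lemma sum_n_range_by_parts N :
  sum_n (fun k => INR k * P_R_eq k) N =
  sum_n (fun k => 1 - P_R_le k) N - (INR N + 1) * (1 - P_R_le N).
Proof.
  induction N as [|N IH]; [rewrite !sum_O | rewrite !sum_Sn, IH];
    match goal with |- ?a = ?b => change (@eq R a b) end; [simpl; ring|].
  change (plus ?a ?b) with (a + b). change (P_R_eq (S N)) with (P_R_le (S N) - P_R_le N).
  rewrite S_INR. ring.
Qed.

Lemma linear_times_geom_le N : (INR N + 1) * (8/9) ^ N <= 16 * (17/18) ^ N.
Proof.
  assert (Hbern : 1 + INR N / 16 <= (17/16) ^ N).
  { induction N as [|N IH]; [simpl; lra|]. rewrite S_INR. simpl.
    pose proof (pos_INR N). nra. }
  pose proof (pow_8_9_in_01 N).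
  replace (17/18) with (17/16 * (8/9)) by field. rewrite Rpow_mult_distr. nra.
Qed.

Lemma is_lim_seq_tail_weighted : is_lim_seq (fun N => (INR N + 1) * (1 - P_R_le N)) 0.
Proof.
  apply is_lim_seq_le_le with (u := fun _ => 0) (w := fun N => 17/9 * 16 * (17/18) ^ N).
  - intros N. pose proof (tail_nonneg N). pose proof (tail_le_geom N).
    pose proof (linear_times_geom_le N). pose proof (pos_INR N).
    split; [apply Rmult_le_pos; lra|].
    apply Rle_trans with ((INR N + 1) * (17/9 * (8/9) ^ N)); [apply Rmult_le_compat_l|]; lra.
  - apply is_lim_seq_const.
  - pose proof (is_lim_seq_scal_l _ (17/9 * 16) _ (is_lim_seq_geom (17/18) ltac:(rewrite Rabs_pos_eq; lra))) as H.
    simpl in H. rewrite Rmult_0_r in H. exact H.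
Qed.

Lemma is_series_mean_range : is_series (fun n => INR n * P_R_eq n) mean_range.
Proof.
  pose proof (is_lim_seq_minus' _ _ _ _ (Series_correct _ ex_series_tail) is_lim_seq_tail_weighted) as H.
  rewrite Rminus_0_r in H. apply (is_lim_seq_ext _ _ _ (fun N => eq_sym (sum_n_range_by_parts N)) H).
Qed.

Lemma P_R_finite_1 : P_R_finite = 1.
Proof.
  unfold P_R_finite. replace 1 with (real (Finite 1)) by reflexivity. f_equal.
  apply is_lim_seq_unique.
  apply is_lim_seq_le_le with (u := fun N => 1 - 17/9 * (8/9) ^ N) (w := fun _ => 1).
  - intros N. pose proof (tail_nonneg N). pose proof (tail_le_geom N). lra.
  - pose proof (is_lim_seq_scal_l _ (17/9) _ (is_lim_seq_geom (8/9) ltac:(rewrite Rabs_pos_eq; lra))) as H.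
    simpl in H. rewrite Rmult_0_r in H.
    pose proof (is_lim_seq_minus' _ _ _ _ (is_lim_seq_const 1) H) as H1.
    rewrite Rminus_0_r in H1. exact H1.
  - apply is_lim_seq_const.
Qed.

Theorem theorem3 :
  (forall n : nat,
      3/9 * alpha1 n + 4/9 * alpha1 n ^ 2 + 2/9 * alpha1 n ^ 3 <= P_R_le n /\
      P_R_le n <= 3/9 * alpha2 n + 4/9 * alpha2 n ^ 2 + 2/9 * alpha2 n ^ 3) /\
  (P_R_finite = 1 /\
   exists ER : R,
     is_series (fun n : nat => INR n * P_R_eq n) ER /\
     6144/1000 <= ER <= 7448/1000).
Proof.
  split; [|split; [apply P_R_finite_1 | exists mean_range; split]].
  - intros n. rewrite <- !mul_g_expand. apply P_R_le_bounds.
  - apply is_series_mean_range.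
  - apply mean_range_bounds.
Qed.
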